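(* Let $X=\{x_j:j\in J\}\subset\mathbb{R}^2$ be finite with $n=|J|$, quadratic min-power centre $s^*$, centroid $M$, and let $r\in J$ be such that $x_r$ is a point of $X$ farthest from $M$. The following are equivalent: (1) $|\Lambda|=1$; (2) $s^*=M_r$; (3) $M_j\in V(x_j)$ for some $j\in J$.
   Context: $P(s)=\sum_{i\in J}\|s-x_i\|^2+\max_{i\in J}\|s-x_i\|^2$; $s^*$ is its unique minimiser; $M=\frac1n\sum_i x_i$; $M_j=\frac{1}{n+1}\big(x_j+\sum_{i\in J}x_i\big)$; $V(x_j)=\{s:\|s-x_j\|=\max_{i\in J}\|s-x_i\|\}$ (the region of $x_j$ in the farthest point Voronoi diagram). A KKT multiplier vector for $s^*$ is $(\lambda_j)_{j\in J}$ with $\lambda_j\geq0$, $\sum_j\lambda_j=1$, $s^*=\sum_j\lambda_jM_j$, and $\lambda_j\big(\|s^*-x_j\|-\max_{i\in J}\|s^*-x_i\|\big)=0$ for all $j$. $|\Lambda|$ denotes the minimum, over all KKT multiplier vectors for $s^*$, of the number of nonzero entries. *)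

From HB Require Import structures.
From mathcomp Require Import all_boot all_order all_algebra.
From mathcomp Require Import reals.
Set Implicit Arguments. Unset Strict Implicit. Unset Printing Implicit Defensive.
Import Order.TTheory GRing.Theory Num.Theory.
Local Open Scope ring_scope.

Section Defs.
Variable R : realType.
Notation pt := 'rV[R]_2.

Definition enorm (u : pt) : R := Num.sqrt (\sum_(k < 2) u 0 k ^+ 2).

Variable J : finType.
Variable x : J -> pt.

(* max_{i in J} ||s - x_i|| (distances are >= 0, so 0 is a neutral element) *)
Definition maxdist (s : pt) : R := \big[Num.max/0]_(i : J) enorm (s - x i).

Definition Pfun (s : pt) : R :=
  \sum_(i : J) enorm (s - x i) ^+ 2 + maxdist s ^+ 2.

Definition centroid : pt := (#|J|%:R)^-1 *: \sum_(i : J) x i.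

Definition Mj (j : J) : pt := ((#|J|.+1)%:R)^-1 *: (x j + \sum_(i : J) x i).

Definition Vreg (j : J) : pt -> Prop := fun s => enorm (s - x j) = maxdist s.

Definition is_KKT (s : pt) (lam : J -> R) : Prop :=
  [/\ forall j, 0 <= lam j,
      \sum_(j : J) lam j = 1,
      s = \sum_(j : J) lam j *: Mj j
    & forall j, lam j * (enorm (s - x j) - maxdist s) = 0].

Definition nnz (lam : J -> R) : nat := #|[set j : J | lam j != 0]|.

(* |Lambda| = k : k is the minimum, over all KKT multiplier vectors for s,
   of the number of nonzero entries. *)
Definition card_Lambda_is (s : pt) (k : nat) : Prop :=
  (exists2 lam, is_KKT s lam & nnz lam = k) /\
  (forall lam, is_KKT s lam -> (k <= nnz lam)%N).
End Defs.

From HB Require Import structures.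
From mathcomp Require Import all_boot all_order all_algebra.
From mathcomp Require Import reals.
From mathcomp Require Import ring lra.
Import Order.TTheory GRing.Theory Num.Theory.
Set Implicit Arguments. Unset Strict Implicit. Unset Printing Implicit Defensive.
Local Open Scope ring_scope.

(* If M_j lies in the farthest-point region V(x_j), then P is bounded below by
   P_j := sum_i |. - x_i|^2 + |. - x_j|^2, with equality at M_j, the minimiser
   of P_j; hence s* = M_j, and the multiplier vector concentrated on j is a KKT
   vector with one nonzero entry. Conversely a single nonzero multiplier at j
   forces s* = M_j in V(x_j). Since M_j = M + (x_j - M)/(n+1), comparing the
   distances from M and from M_j shows that x_j is then the point farthest from
   M, so M_j = M_r.
   Finally, if s* = M_r but M_r is not in V(x_r), move from M_r towards M, which
   lies in V(x_r): every |t - x_i|^2 - |t - x_r|^2 is affine in t and nonpositive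
   at M, so the excess of the max term over |t - x_r|^2 drops linearly, while
   P_r grows only quadratically away from its minimiser M_r. *)

Definition dotp (R : pzRingType) (n : nat) (u v : 'rV[R]_n) : R :=
  \sum_k u 0 k * v 0 k.

Notation sqn u := (dotp u u).

Section Dotp.
Variables (R : realDomainType) (n : nat).
Implicit Types (u v w : 'rV[R]_n) (a : R).

Lemma dotpC u v : dotp u v = dotp v u.
Proof. by apply: eq_bigr => k _; rewrite mulrC. Qed.

Lemma dotpDl u v w : dotp (u + v) w = dotp u w + dotp v w.
Proof. by rewrite /dotp -big_split; apply: eq_bigr => k _; rewrite mxE mulrDl. Qed.

Lemma dotpNl u v : dotp (- u) v = - dotp u v.
Proof. by rewrite /dotp -sumrN; apply: eq_bigr => k _; rewrite mxE mulNr. Qed.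

Lemma dotpZl a u v : dotp (a *: u) v = a * dotp u v.
Proof. by rewrite /dotp mulr_sumr; apply: eq_bigr => k _; rewrite mxE mulrA. Qed.

Lemma dotp0r u : dotp u 0 = 0.
Proof. by apply: big1 => k _; rewrite mxE mulr0. Qed.

Lemma dotpDr u v w : dotp u (v + w) = dotp u v + dotp u w.
Proof. by rewrite !(dotpC u) dotpDl. Qed.

Lemma dotpNr u v : dotp u (- v) = - dotp u v.
Proof. by rewrite !(dotpC u) dotpNl. Qed.

Lemma dotpZr a u v : dotp u (a *: v) = a * dotp u v.
Proof. by rewrite !(dotpC u) dotpZl. Qed.

Definition dotpE := (dotpDl, dotpDr, dotpNl, dotpNr, dotpZl, dotpZr).

Lemma dotp_sumr (I : Type) (s : seq I) (f : I -> 'rV[R]_n) u :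
  dotp u (\sum_(i <- s) f i) = \sum_(i <- s) dotp u (f i).
Proof. exact: (big_morph _ (dotpDr u) (dotp0r u)). Qed.

Lemma sqn_ge0 u : 0 <= sqn u.
Proof. by apply: sumr_ge0 => k _; rewrite -expr2 sqr_ge0. Qed.

Lemma sqn_eq0 u : (sqn u == 0) = (u == 0).
Proof.
apply/idP/eqP => [|->]; last by rewrite dotp0r.
rewrite psumr_eq0 => [/allP u0|k _]; last by rewrite -expr2 sqr_ge0.
apply/rowP => k; rewrite mxE.
by have /implyP/(_ isT) := u0 k (mem_index_enum k); rewrite mulf_eq0 orbb => /eqP.
Qed.

Lemma sqnD u v : sqn (u + v) = sqn u + 2 * dotp u v + sqn v.
Proof. by rewrite !dotpE (dotpC v u); ring. Qed.

Lemma sqnZ a u : sqn (a *: u) = a ^+ 2 * sqn u.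
Proof. by rewrite dotpZl dotpZr mulrA expr2. Qed.

(* Koenig-Huygens *)
Lemma sum_sqn_centroid (s : seq 'rV[R]_n) (c t : 'rV[R]_n) :
  (size s)%:R *: c = \sum_(y <- s) y ->
  \sum_(y <- s) sqn (t - y) = \sum_(y <- s) sqn (c - y) + (size s)%:R * sqn (t - c).
Proof.
move=> sc.
have cross : \sum_(y <- s) dotp (t - c) (c - y) = 0.
  rewrite -dotp_sumr sumrB big_const_seq count_predT iter_addr_0 -scaler_nat sc.
  by rewrite subrr dotp0r.
have split_sqn y : sqn (t - y) = sqn (t - c) + 2 * dotp (t - c) (c - y) + sqn (c - y).
  by rewrite -sqnD addrA subrK.
rewrite (eq_bigr _ (fun y _ => split_sqn y)).
rewrite !big_split /= -mulr_sumr cross mulr0 addr0 addrC.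
by rewrite big_const_seq count_predT iter_addr_0 mulr_natl.
Qed.

Lemma sqdist_diff_affine (s c y z : 'rV[R]_n) a :
  let w := (1 - a) *: s + a *: c in
  sqn (w - y) - sqn (w - z) =
  (1 - a) * (sqn (s - y) - sqn (s - z)) + a * (sqn (c - y) - sqn (c - z)).
Proof.
by rewrite /= !dotpE !(dotpC c s, dotpC y s, dotpC z s, dotpC y c, dotpC z c); ring.
Qed.

End Dotp.

Section Plane.
Variables (R : realType) (J : finType) (x : J -> 'rV[R]_2).
Implicit Types (s t c : 'rV[R]_2) (i j : J).

Local Notation n := (#|J|%:R : R).
Local Notation N := (#|J|.+1%:R : R).

Lemma enorm_sqr (u : 'rV[R]_2) : enorm u ^+ 2 = sqn u.
Proof.
rewrite /enorm sqr_sqrtr; last by apply: sumr_ge0 => k _; rewrite sqr_ge0.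
by apply: eq_bigr => k _; rewrite expr2.
Qed.

Lemma enorm_ge0 (u : 'rV[R]_2) : 0 <= enorm u.
Proof. exact: sqrtr_ge0. Qed.

Lemma ler_enorm (u v : 'rV[R]_2) : (enorm u <= enorm v) = (sqn u <= sqn v).
Proof. by rewrite -!enorm_sqr ler_pXn2r ?nnegrE ?enorm_ge0. Qed.

Lemma maxdist_ge0 s : 0 <= maxdist x s.
Proof. exact: bigmax_ge_id. Qed.

Lemma sqn_le_maxdist2 s i : sqn (s - x i) <= maxdist x s ^+ 2.
Proof.
by rewrite -enorm_sqr ler_pXn2r ?nnegrE ?enorm_ge0 ?maxdist_ge0 //; apply: le_bigmax.
Qed.

Lemma maxdist2_le s B :
  0 <= B -> (forall i, sqn (s - x i) <= B) -> maxdist x s ^+ 2 <= B.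
Proof.
move=> B0 sB; rewrite -(sqr_sqrtr B0) ler_pXn2r ?nnegrE ?maxdist_ge0 ?sqrtr_ge0 //.
apply: bigmax_le => [|i _]; first exact: sqrtr_ge0.
by rewrite -(@ler_pXn2r _ 2) ?nnegrE ?enorm_ge0 ?sqrtr_ge0 // enorm_sqr sqr_sqrtr.
Qed.

Lemma Vreg_maxdist2 j s : Vreg x j s <-> maxdist x s ^+ 2 <= sqn (s - x j).
Proof.
rewrite /Vreg -enorm_sqr; split=> [-> //|le_ms].
apply/le_anti; rewrite le_bigmax /=.
by rewrite -(@ler_pXn2r _ 2) ?nnegrE ?enorm_ge0 ?maxdist_ge0.
Qed.

Lemma VregP j s : Vreg x j s <-> forall i, sqn (s - x i) <= sqn (s - x j).
Proof.
rewrite Vreg_maxdist2; split=> [le_ms i | far_j].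
  exact: le_trans (sqn_le_maxdist2 s i) le_ms.
by apply: maxdist2_le; [exact: sqn_ge0 | exact: far_j].
Qed.

Lemma PfunE s : Pfun x s = \sum_i sqn (s - x i) + maxdist x s ^+ 2.
Proof. by rewrite /Pfun; congr (_ + _); apply: eq_bigr => i _; rewrite enorm_sqr. Qed.

Definition Pj j t := \sum_i sqn (t - x i) + sqn (t - x j).

Lemma Pj_le_Pfun j t : Pj j t <= Pfun x t.
Proof. by rewrite PfunE lerD2l sqn_le_maxdist2. Qed.

Lemma Pfun_Vreg j t : Vreg x j t -> Pfun x t = Pj j t.
Proof. by rewrite /Vreg PfunE => <-; rewrite enorm_sqr. Qed.

Lemma scale_Mj j : N *: Mj x j = x j + \sum_i x i.
Proof. by rewrite /Mj scalerA divff ?scale1r ?pnatr_eq0. Qed.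

Lemma scale_centroid : (0 < #|J|)%N -> n *: centroid x = \sum_i x i.
Proof. by move=> J0; rewrite /centroid scalerA divff ?scale1r // pnatr_eq0 -lt0n. Qed.

Lemma Mj_centroid j : (0 < #|J|)%N ->
  Mj x j = centroid x + N^-1 *: (x j - centroid x).
Proof.
move=> J0; apply: (@scalerI _ _ N); first by rewrite pnatr_eq0.
rewrite scale_Mj scalerDr scalerKV ?pnatr_eq0 // -natr1 scalerDl scale1r.
by rewrite (scale_centroid J0) -addrA [centroid x + _]addrC subrK addrC.
Qed.

Lemma PjE j t : Pj j t = Pj j (Mj x j) + N * sqn (t - Mj x j).
Proof.
pose pts := x j :: map x (enum J).
have PjE u : Pj j u = \sum_(y <- pts) sqn (u - y).
  by rewrite big_cons big_map big_enum addrC.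
have size_pts : size pts = #|J|.+1 by rewrite /= size_map -cardE.
have Mj_pts : (size pts)%:R *: Mj x j = \sum_(y <- pts) y.
  by rewrite size_pts scale_Mj big_cons big_map big_enum.
by rewrite !PjE (sum_sqn_centroid t Mj_pts) size_pts.
Qed.

Lemma Mj_min j t : Vreg x j (Mj x j) -> Pfun x (Mj x j) <= Pfun x t.
Proof.
move=> /Pfun_Vreg ->; apply: le_trans (Pj_le_Pfun j t).
by rewrite [leRHS]PjE lerDl mulr_ge0 ?sqn_ge0.
Qed.

Lemma Vreg_Mj_eq j r : (0 < #|J|)%N ->
  Vreg x r (centroid x) -> Vreg x j (Mj x j) -> x j = x r.
Proof.
move=> J0 /VregP M_far /VregP Mj_far.
apply: (addIr (- centroid x)).
have := Mj_far r; have := M_far j; rewrite Mj_centroid //.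
set M := centroid x; set e := N^-1; set p := x j - M; set q := x r - M.
have -> : M - x j = - p by rewrite opprB.
have -> : M - x r = - q by rewrite opprB.
have -> : M + e *: p - x r = e *: p - q by rewrite opprB addrA [e *: p + M]addrC.
have -> : M + e *: p - x j = (e - 1) *: p.
  by rewrite scalerBl scale1r opprB addrA [e *: p + M]addrC.
have e_gt0 : 0 < e by rewrite invr_gt0 ltr0Sn.
have e_le1 : e <= 1 by rewrite invf_le1 ?ler1n ?ltr0Sn.
clearbody p q => pq Mjpq; apply/eqP.
rewrite -subr_eq0 -sqn_eq0 eq_le sqn_ge0 andbT.
(* e |p - q|^2 <= (1 - e) (|p|^2 - |q|^2) <= 0 *)
move: pq Mjpq; rewrite !dotpE (dotpC q p); nra.
Qed.

Lemma Vreg_Mj_of_min r c : Vreg x r c ->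
  (forall t, Pfun x (Mj x r) <= Pfun x t) -> Vreg x r (Mj x r).
Proof.
move=> /VregP c_far Mr_min; set s := Mj x r.
apply/Vreg_maxdist2; rewrite leNgt; apply/negP => lt_sm.
pose d := maxdist x s ^+ 2 - sqn (s - x r).
have d_gt0 : 0 < d by rewrite subr_gt0.
pose K := sqn (c - s).
have NK_ge0 : 0 <= N * K by rewrite mulr_ge0 ?sqn_ge0.
(* step size chosen so that the quadratic loss N a^2 K = a d - a^2 d stays
   below the linear gain a d *)
pose a := d / (d + N * K).
have a_gt0 : 0 < a by rewrite divr_gt0 // ltr_wpDr.
have aE : a * (d + N * K) = d by rewrite divfK // gt_eqF // ltr_wpDr.
have a_le1 : a <= 1 by nra.
pose t := (1 - a) *: s + a *: c.
have t_far i : sqn (t - x i) <= sqn (t - x r) + (1 - a) * d.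
  rewrite -lerBlDl /t sqdist_diff_affine.
  have := sqn_le_maxdist2 s i; have := c_far i; rewrite /d; nra.
have Pt : Pfun x t <= Pj r t + (1 - a) * d.
  rewrite PfunE /Pj -addrA lerD2l; apply: maxdist2_le t_far.
  by rewrite addr_ge0 ?sqn_ge0 // mulr_ge0 ?subr_ge0 // ltW.
have Ps : Pfun x s = Pj r s + d by rewrite PfunE /Pj /d; lra.
have ts : sqn (t - s) = a ^+ 2 * K.
  have -> : t - s = a *: (c - s) by apply/rowP => k; rewrite !mxE; ring.
  exact: sqnZ.
have a2d_gt0 := mulr_gt0 (mulr_gt0 a_gt0 a_gt0) d_gt0.
have := congr1 (GRing.mul a) aE.
have := Mr_min t; rewrite Ps; move: Pt; rewrite PjE -/s ts; nra.
Qed.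

Lemma KKT_nnz_gt0 s lam : is_KKT x s lam -> (0 < nnz lam)%N.
Proof.
case=> _ lam_sum1 _ _; rewrite lt0n cards_eq0; apply/negP => /eqP/setP lam0.
move: lam_sum1; rewrite big1 => [/esym/eqP|i _]; first by rewrite oner_eq0.
by have := lam0 i; rewrite !inE => /negbFE/eqP.
Qed.

Lemma KKT_nnz1 s lam : is_KKT x s lam -> nnz lam = 1%N ->
  exists j, s = Mj x j /\ Vreg x j s.
Proof.
case=> _ lam_sum1 sE slack /eqP/cards1P[j supp_lam].
have lam0 i : i != j -> lam i = 0.
  by apply/contraNeq; rewrite -in_set1 -supp_lam inE.
have lam_j : lam j = 1 by rewrite -lam_sum1 (bigD1 j) //= big1 ?addr0 // => i /lam0.
have sMj : s = Mj x j.
  rewrite sE (bigD1 j) //= big1 => [|i /lam0 ->].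
    by rewrite lam_j scale1r addr0.
  by rewrite scale0r.
by exists j; split=> //; apply/eqP; rewrite -subr_eq0 -(mul1r (_ - _)) -lam_j slack.
Qed.

Lemma KKT_indicator j :
  Vreg x j (Mj x j) -> is_KKT x (Mj x j) (fun i => (i == j)%:R).
Proof.
move=> Vj; split=> [i|||i]; first by rewrite ler0n.
- by rewrite (bigD1 j) //= eqxx big1 ?addr0 // => i /negbTE ->.
- rewrite (bigD1 j) //= eqxx scale1r big1 ?addr0 // => i /negbTE ->.
  by rewrite scale0r.
- by case: eqP => [->|_]; rewrite ?Vj ?subrr ?mulr0 ?mul0r.
Qed.

Lemma nnz_indicator j : nnz (fun i => (i == j)%:R : R) = 1%N.
Proof.
rewrite /nnz -(cards1 j); apply: eq_card => i.
by rewrite !inE; case: (i =P j); rewrite ?oner_eq0 ?eqxx.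
Qed.

Lemma card_Lambda1P s :
  card_Lambda_is x s 1 <-> exists j, s = Mj x j /\ Vreg x j s.
Proof.
split=> [[[lam KKT nnz1] _] | [j [-> Vj]]]; first exact: KKT_nnz1 KKT nnz1.
split=> [|lam /KKT_nnz_gt0 //].
by exists (fun i => (i == j)%:R); [exact: KKT_indicator | exact: nnz_indicator].
Qed.

End Plane.

Theorem proposition1 (R : realType) (J : finType) (x : J -> 'rV[R]_2)
    (x_inj : injective x) (J_nonempty : (0 < #|J|)%N)
    (sstar : 'rV[R]_2)
    (sstar_min : forall t : 'rV[R]_2, Pfun x sstar <= Pfun x t)
    (sstar_unique : forall t : 'rV[R]_2, Pfun x t <= Pfun x sstar -> t = sstar)
    (r : J)
    (r_far : forall i : J, enorm (centroid x - x i) <= enorm (centroid x - x r)) :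
  [<-> card_Lambda_is x sstar 1;
       sstar = Mj x r;
       exists j : J, Vreg x j (Mj x j)].
Proof.
have V_M : Vreg x r (centroid x) by apply/VregP => i; rewrite -ler_enorm.
have sstar_Mj j : Vreg x j (Mj x j) -> sstar = Mj x j.
  by move=> Vj; apply/esym/sstar_unique/Mj_min.
tfae=> [/card_Lambda1P[j [-> Vj]] | sMr | [j Vj]].
- by rewrite /Mj (Vreg_Mj_eq J_nonempty V_M Vj).
- by exists r; apply: (Vreg_Mj_of_min V_M) => t; rewrite -sMr.
- by apply/card_Lambda1P; exists j; rewrite (sstar_Mj j Vj).
Qed.
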